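(* Let $D\subset\mathbb{C}$ be an open disk centered at $0$, $f_1,\dots,f_p:D\to\mathbb{C}$ analytic, $A_1,\dots,A_p\in\mathbb{C}^{n\times n}$ with $M(\lambda)=\sum_{m=1}^p f_m(\lambda)A_m$ satisfying $M(\lambda)^T=M(\lambda)$ on $D$, and $M_j:=M^{(j)}(0)=\sum_{m=1}^pf_m^{(j)}(0)A_m$. Let $\mathbf{C}=[c_{i,j}]$ be the infinite matrix determined by $c_{i,1}=1/(i+1)$ ($i\ge1$) and $c_{i-1,j}=\frac{j}{i}c_{i,j-1}$ ($i,j>1$); let $\mathbf{S}$ be the infinite block matrix with $S_{1,1}=I$, $S_{1,j}=S_{j,1}=0$ ($j\ge2$), $S_{i,j}=c_{i-1,j-1}M_{i+j-2}$ ($i,j\ge2$); let $\mathbf{A}=\operatorname{diag}(-M_0,I,I,\dots)$; and let $\mathbf{B}$ have first block row $(M_1,\frac12M_2,\frac13M_3,\dots)$, blocks $\frac1jI$ in positions $(j+1,j)$, zeros elsewhere. $[\mathbf{X}]_N$ denotes the leading $N\times N$ block submatrix. Let $k+1\le N$, assume $[\mathbf{S}]_{2N}$ and $[\mathbf{S}\mathbf{A}]_N$ are invertible, let $q_k\in\mathbb{C}^{Nn}$ have only its first $k$ blocks (in $\mathbb{C}^n$) nonzero, and let $w=[\mathbf{S}\mathbf{A}]_N^{-1}[\mathbf{S}\mathbf{B}]_Nq_k$; only the first $k+1$ blocks of $w$ are nonzero, and let $W\in\mathbb{C}^{n\times(k+1)}$ have these blocks as columns. Let $z=[\mathbf{S}\mathbf{B}]_Nw$.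 Then the first $k+1$ blocks of $z$, forming the columns of $Z=[z_1,\dots,z_{k+1}]$, satisfy $$Z=\sum_{m=1}^pA_mW\,(G_{k+1}\circ F_m),$$ where $G_{k+1}\in\mathbb{R}^{(k+1)\times(k+1)}$ has entries $g_{j,1}=g_{1,j}=1/j$ for $j=1,\dots,k+1$ and $g_{i,j}=c_{i-1,j}/j$ for $i,j\ge2$, and $F_m\in\mathbb{C}^{(k+1)\times(k+1)}$ is the Hankel matrix with $(i,j)$ entry $f_m^{(i+j-1)}(0)$.
   Context: $\circ$ denotes the Hadamard (entrywise) product. Transpose is non-conjugate. *)

From HB Require Import structures.
From mathcomp Require Import all_boot all_order all_algebra.
From mathcomp Require Import all_classical all_reals all_analysis.
From mathcomp Require Import complex.
Set Implicit Arguments. Unset Strict Implicit. Unset Printing Implicit Defensive.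
Import Order.TTheory GRing.Theory Num.Theory.
Import numFieldNormedType.Exports.
Local Open Scope classical_set_scope.
Local Open Scope ring_scope.
Local Open Scope complex_scope.

(* The complex numbers C = R[i] over an arbitrary real field R : realType,
   seen as a numFieldType (so that it is a normed module over itself and
   derive1 is the complex derivative). *)
Definition Cx (R : realType) : numFieldType := R[i].

Definition disk (R : realType) (r : R) : set (Cx R) :=
  [set z : Cx R | `|z| < (r%:C : Cx R)].

Definition analytic_on (R : realType) (D : set (Cx R)) (f : Cx R -> Cx R) :=
  forall z0, D z0 -> exists (a : nat -> Cx R) (rho : R), 0 < rho /\
    forall z : Cx R, `|z - z0| < (rho%:C : Cx R) ->
      (fun K => \sum_(k < K) a k * (z - z0) ^+ k) @ \oo --> f z.

Definition Mfun (R : realType) (p n : nat) (f : 'I_p -> Cx R -> Cx R)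
  (A : 'I_p -> 'M[Cx R]_n) (lam : Cx R) : 'M[Cx R]_n :=
  \sum_(m < p) f m lam *: A m.

Definition Mder (R : realType) (p n : nat) (f : 'I_p -> Cx R -> Cx R)
  (A : 'I_p -> 'M[Cx R]_n) (j : nat) : 'M[Cx R]_n :=
  \sum_(m < p) (derive1n j (f m) 0) *: A m.

(* cf i j' = c_{i, j'+1} : c_{i,1} = 1/(i+1), c_{i,j} = j/(i+1) c_{i+1,j-1}
   (the recurrence c_{i-1,j} = (j/i) c_{i,j-1}). *)
Fixpoint cf (R : realType) (i j : nat) {struct j} : Cx R :=
  match j with
  | 0 => (i.+1)%:R^-1
  | j'.+1 => (j'.+2)%:R / (i.+1)%:R * cf R i.+1 j'
  end.
(* c i j = c_{i,j} for i, j >= 1 (1-based as in the paper) *)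
Definition cc (R : realType) (i j : nat) : Cx R := cf R i j.-1.

(* Infinite block matrices, 1-based block indices; index 0 is unused (= 0). *)
Definition bmat (R : realType) (n : nat) := nat -> nat -> 'M[Cx R]_n.

Definition Smat (R : realType) (n : nat) (M : nat -> 'M[Cx R]_n) : bmat R n :=
  fun i j =>
    if (i == 0%N) || (j == 0%N) then 0
    else if (i == 1%N) && (j == 1%N) then 1%:M
    else if (i == 1%N) || (j == 1%N) then 0
    else cc R i.-1 j.-1 *: M (i + j - 2)%N.

Definition Amat (R : realType) (n : nat) (M : nat -> 'M[Cx R]_n) : bmat R n :=
  fun i j =>
    if (i == 0%N) || (i != j) then 0
    else if i == 1%N then - M 0%N else 1%:M.

Definition Bmat (R : realType) (n : nat) (M : nat -> 'M[Cx R]_n) : bmat R n :=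
  fun i j =>
    if j == 0%N then 0
    else if i == 1%N then (j%:R)^-1 *: M j
    else if i == j.+1 then ((j%:R)^-1)%:M
    else 0.

(* Product of infinite block matrices X * Y, for Y whose column j is
   supported in block rows 1..j+1 (true for A and B, see the lemmas below);
   for such Y this finite sum is exactly the infinite product. *)
Definition imul (R : realType) (n : nat) (X Y : bmat R n) : bmat R n :=
  fun i j => \sum_(l < j.+2) X i l *m Y l j.

Lemma Amat_supp (R : realType) n M l j : (l == 0%N) || (j.+1 < l)%N ->
  @Amat R n M l j = 0.
Proof.
rewrite /Amat; case/orP => [/eqP -> //|Hl].
have -> : (l != j) by rewrite neq_ltn (ltn_trans (ltnSn j) Hl) orbT.
by rewrite orbT.
Qed.

Lemma Bmat_supp (R : realType) n M l j : (l == 0%N) || (j.+1 < l)%N ->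
  @Bmat R n M l j = 0.
Proof.
rewrite /Bmat; case: (j =P 0%N) => [//|_].
case/orP => [/eqP ->|Hl] //.
have -> : (l == 1%N) = false by apply/negbTE; case: l Hl => // -[].
have -> : (l == j.+1) = false by apply/negbTE; rewrite neq_ltn Hl orbT.
by [].
Qed.

Definition trunc (R : realType) (n N : nat) (X : bmat R n)
  : 'M[Cx R]_(\sum_(i < N) n) :=
  @mxblock _ N N (fun _ => n) (fun _ => n) (fun i j => X i.+1 j.+1).

(* l-th block (1-based) of a block vector in C^{Nn}; 0 if out of range *)
Definition blk (R : realType) (n N : nat) (v : 'cV[Cx R]_(\sum_(i < N) n))
  (l : nat) : 'cV[Cx R]_n :=
  if l is l'.+1 then
    match (insub l' : option 'I_N) with
    | Some i => @submxcol _ N (fun _ => n) 1 v i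
    | None => 0
    end
  else 0.

Definition hadamard (T : ringType) (m n : nat) (X Y : 'M[T]_(m, n)) :=
  \matrix_(i, j) (X i j * Y i j).

(* G_K : g_{j,1} = g_{1,j} = 1/j, g_{i,j} = c_{i-1,j}/j (i,j >= 2);
   0-based indices a = i-1, b = j-1. *)
Definition Gmat (R : realType) (K : nat) : 'M[Cx R]_K :=
  \matrix_(a < K, b < K)
    if (a : nat) == 0%N then (b.+1%:R)^-1
    else if (b : nat) == 0%N then (a.+1%:R)^-1
    else cc R a b.+1 / (b.+1)%:R.

Definition Fmat (R : realType) (g : Cx R -> Cx R) (K : nat) : 'M[Cx R]_K :=
  \matrix_(a < K, b < K) derive1n (a + b + 1)%N g 0.

From HB Require Import structures.
From mathcomp Require Import all_boot all_order all_algebra.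
From mathcomp Require Import all_classical all_reals all_analysis.
From mathcomp Require Import complex.
From mathcomp Require Import ring.
Set Implicit Arguments. Unset Strict Implicit. Unset Printing Implicit Defensive.
Import Order.TTheory GRing.Theory Num.Theory.
Import numFieldNormedType.Exports.
Local Open Scope classical_set_scope.
Local Open Scope ring_scope.

(* Since A = diag(-M_0, I, I, ...) and S vanishes off the corner in its first
   block row and column, [SA]_N = diag(-M_0, S_{ij} (2 <= i, j <= N)); and since
   S_{i,1} = 0 for i >= 2, (SB)_{i,j} = S_{i,j+1} / j for such i.  Hence [SA]_N maps
   (w_1, q_1/1, ..., q_{N-1}/(N-1)) to [SB]_N q in every block row but the first,
   where both sides only involve w_1; as q_N = 0 and [SA]_N is invertible, w is
   that vector and vanishes beyond block k+1.  The closed form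
   c_{i,j} = i! j! / (i+j)! makes c_{i,j+1} / (j+1) symmetric in i and j, so
   (SB)_{i,j} = g_{j,i} M_{i+j-1}, and expanding
   M_{i+j-1} = sum_m f_m^{(i+j-1)}(0) A_m gives the Hadamard form of Z. *)

Arguments blk : simpl never.

Section BlockVectors.
Variables (R : realType) (n N : nat).
Implicit Types u v : 'cV[Cx R]_(\sum_(i < N) n).

Lemma blk_submxcol v (i : 'I_N) : blk v i.+1 = submxcol v i.
Proof. by rewrite /blk valK. Qed.

Lemma blk_out v l : (N <= l)%N -> blk v l.+1 = 0.
Proof. by move=> le_Nl; rewrite /blk insubF // ltnNge le_Nl. Qed.

Lemma blk_mxcol (F : 'I_N -> 'cV[Cx R]_n) (i : 'I_N) :
  blk (\mxcol_j F j) i.+1 = F i.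
Proof. by rewrite blk_submxcol mxcolK. Qed.

Lemma blk_inj u v : (forall i : 'I_N, blk u i.+1 = blk v i.+1) -> u = v.
Proof. by move=> eq_uv; apply/mxcolP => i; rewrite -!blk_submxcol. Qed.

Lemma blk_trunc_mulmx (X : bmat R n) v i : (i < N)%N ->
  blk (trunc N X *m v) i.+1 = \sum_(j < N) X i.+1 j.+1 *m blk v j.+1.
Proof.
move=> lt_iN; rewrite (blk_submxcol _ (Ordinal lt_iN)) -{1}[v]submxcolK.
rewrite /trunc mul_mxblock_mxrow mxcolK.
by apply: eq_bigr => j _; rewrite blk_submxcol.
Qed.

End BlockVectors.

Section Coefficients.
Variable R : realType.

Lemma cf_factorial i j : cf R i j = (i`! * j.+1`!)%:R / (i + j).+1`!%:R.
Proof.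
have fact_neq0 m : (m`!)%:R != 0 :> Cx R by rewrite pnatr_eq0 -lt0n fact_gt0.
have Sn_neq0 m : 1 + m%:R != 0 :> Cx R by rewrite addrC natr1 pnatr_eq0.
elim: j i => [|j IHj] i /=.
  by rewrite addn0 (factS i) !natrM; field; rewrite fact_neq0 Sn_neq0.
rewrite IHj addSnnS; have := fact_neq0 (i + j.+1).+1.
set D := (_`!)%:R => D_neq0; rewrite (factS j.+1) (factS i) !natrM.
by field; rewrite D_neq0 Sn_neq0.
Qed.

Lemma cc_div_factorial i j : cc R i j.+1 / j.+1%:R = (i`! * j`!)%:R / (i + j).+1`!%:R.
Proof.
rewrite /cc /= cf_factorial (factS j) mulnCA (natrM _ j.+1) [_ * _%:R]mulrC.
by rewrite mulrAC mulfK // pnatr_eq0.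
Qed.

End Coefficients.

Section BlockEntries.
Variables (R : realType) (n : nat) (M : nat -> 'M[Cx R]_n).
Implicit Type X : bmat R n.

Lemma imul_Amat1 X i : imul X (Amat M) i 1%N = - (X i 1%N *m M 0%N).
Proof.
by rewrite /imul !big_ord_recl big_ord0 /Amat /= !mulmx0 add0r !addr0 mulmxN.
Qed.

Lemma imul_AmatS X i j : imul X (Amat M) i j.+2 = X i j.+2.
Proof.
rewrite /imul (bigD1 (@Ordinal j.+4 j.+2 (leqW (ltnSn j.+2)))) //= big1 => [|l].
  by rewrite /Amat eqxx mulmx1 addr0.
by rewrite -val_eqE /= /Amat => ->; rewrite orbT mulmx0.
Qed.

Lemma imul_Bmat X i j : imul X (Bmat M) i j.+1 =
  X i 1%N *m ((j.+1%:R)^-1 *: M j.+1) + (j.+1%:R)^-1 *: X i j.+2.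
Proof.
rewrite /imul big_ord_recr big_ord_recl big_ord_recl big1 /= => [|l _].
  by rewrite /Bmat /= eqxx mulmx0 add0r addr0 mul_mx_scalar.
by rewrite /Bmat /bump /= !add1n !eqSS (ltn_eqF (ltn_ord l)) mulmx0.
Qed.

Lemma Smat_row1 j : Smat M 1%N j.+2 = 0.
Proof. by []. Qed.

Lemma Smat_col1 i : Smat M i.+2 1%N = 0.
Proof. by []. Qed.

Lemma SmatSS i j : Smat M i.+2 j.+2 = cc R i.+1 j.+1 *: M (i + j).+2.
Proof. by rewrite /Smat /= !addSn !addnS !subSS. Qed.

End BlockEntries.

Section TruncatedSystem.
Variables (R : realType) (n : nat) (M : nat -> 'M[Cx R]_n).
Local Notation SA N := (trunc N (imul (Smat M) (Amat M))).
Local Notation SB N := (trunc N (imul (Smat M) (Bmat M))).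

Lemma imul_SB_shift i j :
  imul (Smat M) (Bmat M) i.+2 j.+1 = (j.+1%:R)^-1 *: Smat M i.+2 j.+2.
Proof. by rewrite imul_Bmat Smat_col1 mul0mx add0r. Qed.

Lemma imul_SB_Gmat K (b c : 'I_K) :
  imul (Smat M) (Bmat M) b.+1 c.+1 = Gmat R K c b *: M (c + b + 1)%N.
Proof.
rewrite imul_Bmat mxE; case: b => -[|b] /= _.
  by rewrite Smat_row1 scaler0 addr0 mul1mx addn0 addn1; case: (c : nat).
rewrite Smat_col1 mul0mx add0r SmatSS scalerA addn1 -addSnnS addnC.
case: c => -[|c] //= _; first by rewrite invr1 mul1r.
by rewrite [_^-1 * _]mulrC !cc_div_factorial (mulnC (b.+1)`!) (addnC b.+1) !addSn.
Qed.

Definition scaled_shift N (x : 'cV[Cx R]_n) (q : 'cV[Cx R]_(\sum_(i < N) n)) :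
    'cV[Cx R]_(\sum_(i < N) n) :=
  \mxcol_(i < N) if (i : nat) is j.+1 then (j.+1%:R)^-1 *: blk q j.+1 else x.

Lemma blk_scaled_shift1 N x q : (0 < N)%N -> blk (@scaled_shift N x q) 1%N = x.
Proof. by move=> N_gt0; rewrite /scaled_shift (blk_mxcol _ (Ordinal N_gt0)). Qed.

Lemma blk_scaled_shiftS N x q j : blk q N = 0 ->
  blk (@scaled_shift N x q) j.+2 = (j.+1%:R)^-1 *: blk q j.+1.
Proof.
move=> qN; case: (ltnP j.+1 N) => [lt_jN|].
  by rewrite /scaled_shift (blk_mxcol _ (Ordinal lt_jN)).
move=> le_Nj; rewrite blk_out //; move: le_Nj.
rewrite leq_eqVlt => /orP[/eqP <-|lt_Nj]; first by rewrite qN scaler0.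
by rewrite blk_out ?scaler0.
Qed.

Lemma blk_SA_mulmx1 N v : blk (SA N *m v) 1%N = - (M 0%N *m blk v 1%N).
Proof.
case: N v => [|N] v; first by rewrite !blk_out // mulmx0 oppr0.
rewrite blk_trunc_mulmx // big_ord_recl big1 => [|j _].
  by rewrite imul_Amat1 mul1mx addr0 mulNmx.
by rewrite lift0 imul_AmatS Smat_row1 mul0mx.
Qed.

Lemma blk_SA_mulmx_shift N x q i : blk q N = 0 ->
  blk (SA N *m scaled_shift x q) i.+2 = blk (SB N *m q) i.+2.
Proof.
move=> qN; case: (ltnP i.+1 N) => [lt_iN|le_Ni]; last by rewrite !blk_out.
rewrite !blk_trunc_mulmx //; case: N q lt_iN qN => // N q _ qN.
rewrite big_ord_recl big_ord_recr /= qN mulmx0 addr0 imul_Amat1 Smat_col1 mul0mx.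
rewrite oppr0 mul0mx add0r; apply: eq_bigr => j _.
by rewrite imul_AmatS blk_scaled_shiftS // imul_SB_shift -scalemxAr scalemxAl.
Qed.

Lemma SA_solution N v q : SA N \in unitmx -> blk q N = 0 ->
  SA N *m v = SB N *m q -> v = scaled_shift (blk v 1%N) q.
Proof.
move=> SA_unit qN SAv_SBq.
suff /(congr1 (mulmx (invmx (SA N)))) : SA N *m v = SA N *m scaled_shift (blk v 1%N) q.
  by rewrite !mulKmx.
apply: blk_inj => -[[|i] lt_iN] /=.
  by rewrite !blk_SA_mulmx1 blk_scaled_shift1.
by rewrite SAv_SBq blk_SA_mulmx_shift.
Qed.

Lemma blk_SB_mulmx N K v (b : 'I_K) : (K <= N)%N -> (forall l, (K < l)%N -> blk v l = 0) ->
  blk (SB N *m v) b.+1 =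
  \sum_(c < K) Gmat R K c b *: M (c + b + 1)%N *m blk v c.+1.
Proof.
move=> le_KN v_supp; rewrite blk_trunc_mulmx ?(leq_trans (ltn_ord b)) //.
symmetry; under eq_bigr => c _ do rewrite -imul_SB_Gmat.
rewrite (big_ord_widen N (fun c => imul (Smat M) (Bmat M) b.+1 c.+1 *m blk v c.+1)) //.
rewrite big_mkcond; apply: eq_bigr => j _; case: ltnP => // le_Kj.
by rewrite v_supp ?mulmx0.
Qed.

End TruncatedSystem.

Lemma mulmx_hadamard_Fmat (R : realType) (n p K : nat) (f : 'I_p -> Cx R -> Cx R)
    (A : 'I_p -> 'M[Cx R]_n) (G : 'M[Cx R]_K) (X : 'M[Cx R]_(n, K)) a b :
  (\sum_(m < p) A m *m X *m hadamard G (Fmat (f m) K)) a b =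
  (\sum_(c < K) G c b *: Mder f A (c + b + 1)%N *m col c X) a 0.
Proof.
rewrite !summxE; under eq_bigr do rewrite mxE; rewrite exchange_big.
apply: eq_bigr => c _; rewrite -scalemxAl mxE /Mder [X in _ * X]mxE mulr_sumr.
under [RHS]eq_bigr => j _ do rewrite summxE big_distrl mulr_sumr.
rewrite exchange_big; apply: eq_bigr => m _.
rewrite !mxE big_distrl; apply: eq_bigr => j _; rewrite !mxE /=; ring.
Qed.

Theorem theorem4 (R : realType) (n p : nat) (r : R)
  (f : 'I_p -> Cx R -> Cx R) (A : 'I_p -> 'M[Cx R]_n)
  (N k : nat) (qb : 'I_N -> 'cV[Cx R]_n) :
  0 < r ->
  (forall m, analytic_on (disk r) (f m)) ->
  (forall lam, disk r lam -> (Mfun f A lam)^T = Mfun f A lam) ->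
  (k.+1 <= N)%N ->
  let M := Mder f A in
  let S := Smat M in
  trunc (2 * N) S \in unitmx ->
  trunc N (imul S (Amat M)) \in unitmx ->
  (forall i : 'I_N, (k <= i)%N -> qb i = 0) ->
  let q := \mxcol_i qb i in
  let w := invmx (trunc N (imul S (Amat M))) *m (trunc N (imul S (Bmat M)) *m q) in
  let W := \matrix_(a < n, b < k.+1) blk w b.+1 a 0 in
  let z := trunc N (imul S (Bmat M)) *m w in
  let Z := \matrix_(a < n, b < k.+1) blk z b.+1 a 0 in
  (forall l, (k.+1 < l)%N -> blk w l = 0) /\
  Z = \sum_(m < p) A m *m W *m hadamard (Gmat R k.+1) (Fmat (f m) k.+1).
Proof.
move=> _ _ _ le_kN M S _ SA_unit q_supp q w W z Z.
have q_blk j : (k <= j)%N -> blk q j.+1 = 0.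
  move=> le_kj; case: (ltnP j N) => [lt_jN|]; last exact: blk_out.
  by rewrite (blk_mxcol _ (Ordinal lt_jN)) q_supp.
have qN : blk q N = 0.
  have N_gt0 : (0 < N)%N := leq_ltn_trans (leq0n k) le_kN.
  by rewrite -[X in blk q X](prednK N_gt0) q_blk // -ltnS prednK.
have w_shift : w = scaled_shift (blk w 1%N) q.
  by apply: (SA_solution SA_unit qN); rewrite mulKVmx.
have w_supp l : (k.+1 < l)%N -> blk w l = 0.
  by case: l => [|[|l]] // lt_kl; rewrite w_shift blk_scaled_shiftS ?q_blk ?scaler0.
have col_W (c : 'I_k.+1) : col c W = blk w c.+1.
  by apply/matrixP => d e; rewrite !mxE (ord1 e).
split => //; apply/matrixP => a b; rewrite mulmx_hadamard_Fmat mxE blk_SB_mulmx //.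
by under [in RHS]eq_bigr => c _ do rewrite col_W.
Qed.
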